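(* Let $\Phi$ be an $(s,d)$-product-sparse formula over the variables $Y\cup Z$, $Y=\{y_1,\dots,y_m\}$, $Z=\{z_1,\dots,z_m\}$, and let $v$ be a node of $\Phi$ with product-sparse depth $d(v)$. If $v$ is $k$-weak, then $\mathrm{maxrank}(M_v)\le 2^{s\cdot d(v)}\cdot|\Phi_v|\cdot 2^{b(v)-k/2}$.
   Context: $\mathbb{F}$ is a field. For $g\in\mathbb{F}[Y,Z]$, $M_g$ has rows indexed by monic multilinear monomials $p$ in $Y$ and columns by monic multilinear monomials $q$ in $Z$, with $M_g(p,q)=G$ iff $g=pq\,G+Q$ uniquely with $G$ containing only variables present in $p,q$ and $Q$ having no monomial divisible by $pq$ that contains only variables present in $p,q$; $\mathrm{maxrank}(M_g)=\max_{S:Y\cup Z\to\mathbb{F}}\mathrm{rank}(M_g|_S)$. $M_v$ denotes $M_g$ for the polynomial $g$ computed at $v$. A formula is a fan-in-2 arithmetic circuit (leaves labelled by variables or constants, internal plus/product gates) whose underlying graph is a tree. $\Phi_v$ is the subformula rooted at $v$ and $|\Phi_v|$ its number of gates; $X_v$ (resp. $Y_v$, $Z_v$) is the set of variables (resp. those in $Y$, in $Z$) appearing in $\Phi_v$. A product gate with children $v_1,v_2$ is disjoint if $X_{v_1}\cap X_{v_2}=\emptyset$ and $s$-sparse if the polynomial computed at one of $v_1,v_2$ has at most $2^s$ monomials. The product-sparse depth of $v$ is the maximum number of non-disjoint product gates on any path from a leaf to $v$. $\Phi$ is $(s,d)$-product-sparse if every product gate is disjoint or $s$-sparse, and $d$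 is the product-sparse depth of the root. Let $a(v)=\min\{|Y_v|,|Z_v|\}$ and $b(v)=(|Y_v|+|Z_v|)/2$. A node $v$ is $k$-unbalanced if $b(v)-a(v)\ge k$. A simple path $\gamma$ from a leaf to $v$ is $k$-unbalanced if it contains a $k$-unbalanced node, and central if for every edge from $u_1$ to $u$ on $\gamma$, $b(u)\le 2b(u_1)$. A node $v$ is $k$-weak if every central path reaching $v$ is $k$-unbalanced. *)

From Stdlib Require Import Reals ClassicalEpsilon.
From mathcomp Require Import all_boot all_algebra.
From mathcomp Require Import mpoly.

Set Implicit Arguments.
Unset Strict Implicit.
Unset Printing Implicit Defensive.

Import GRing.Theory.

(* Formulas over the variables 'I_n (here n = m + m: index lshift m i is y_i,
   index rshift m i is z_i). *)
Inductive formula (F : Type) (n : nat) : Type :=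
| FVar of 'I_n
| FConst of F
| FAdd of formula F n & formula F n
| FMul of formula F n & formula F n.

Arguments FVar {F n}.
Arguments FConst {F n}.

Section Formulas.
Variables (F : fieldType) (m : nat).
Local Notation n := (m + m)%N.
Local Notation form := (formula F n).

Fixpoint fpoly (f : form) : {mpoly F[n]} :=
  match f with
  | FVar i => 'X_i
  | FConst c => c%:MP
  | FAdd f1 f2 => (fpoly f1 + fpoly f2)%R
  | FMul f1 f2 => (fpoly f1 * fpoly f2)%R
  end.

Fixpoint fsize (f : form) : nat :=
  match f with
  | FVar _ | FConst _ => 1
  | FAdd f1 f2 | FMul f1 f2 => (fsize f1 + fsize f2).+1
  end.

Fixpoint fvars (f : form) : {set 'I_n} :=
  match f with
  | FVar i => [set i]
  | FConst _ => set0
  | FAdd f1 f2 | FMul f1 f2 => fvars f1 :|: fvars f2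
  end.

Definition Yvars (f : form) : {set 'I_m} := [set i | lshift m i \in fvars f].
Definition Zvars (f : form) : {set 'I_m} := [set i | rshift m i \in fvars f].

(* subformulas Phi_v, for v ranging over the nodes of Phi *)
Fixpoint subformulas (f : form) : seq form :=
  f :: match f with
       | FVar _ | FConst _ => [::]
       | FAdd f1 f2 | FMul f1 f2 => subformulas f1 ++ subformulas f2
       end.

(* all simple paths from a leaf to the root, listed root first, leaf last
   (each node represented by the subformula rooted at it) *)
Fixpoint leaf_paths (f : form) : seq (seq form) :=
  match f with
  | FVar _ | FConst _ => [:: [:: f]]
  | FAdd f1 f2 | FMul f1 f2 => [seq f :: p | p <- leaf_paths f1 ++ leaf_paths f2]
  end.

Definition disjoint_prod (f1 f2 : form) : bool := fvars f1 :&: fvars f2 == set0.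

Definition sparse_prod (s : nat) (f1 f2 : form) : bool :=
  (size (msupp (fpoly f1)) <= expn 2 s) || (size (msupp (fpoly f2)) <= expn 2 s).

Definition nondisj_prod (f : form) : bool :=
  match f with FMul f1 f2 => ~~ disjoint_prod f1 f2 | _ => false end.

Definition psdepth (f : form) : nat :=
  \max_(p <- leaf_paths f) count nondisj_prod p.

Fixpoint prod_gates_ok (s : nat) (f : form) : Prop :=
  match f with
  | FVar _ | FConst _ => True
  | FAdd f1 f2 => prod_gates_ok s f1 /\ prod_gates_ok s f2
  | FMul f1 f2 => (disjoint_prod f1 f2 || sparse_prod s f1 f2)
                  /\ prod_gates_ok s f1 /\ prod_gates_ok s f2
  end.

Definition product_sparse (s d : nat) (f : form) : Prop :=
  prod_gates_ok s f /\ psdepth f = d.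

Definition anode (f : form) : R := INR (minn #|Yvars f| #|Zvars f|).
Definition bnode (f : form) : R := Rdiv (Rplus (INR #|Yvars f|) (INR #|Zvars f|)) 2.

Definition unbalanced (k : R) (f : form) : Prop := Rge (Rminus (bnode f) (anode f)) k.

Fixpoint central (p : seq form) : Prop :=
  match p with
  | u :: ((u1 :: _) as rest) => Rle (bnode u) (Rmult 2 (bnode u1)) /\ central rest
  | _ => True
  end.

Definition unbalanced_path (k : R) (p : seq form) : Prop :=
  List.Exists (unbalanced k) p.

Definition weak (k : R) (f : form) : Prop :=
  forall p, List.In p (leaf_paths f) -> central p -> unbalanced_path k p.

(* the monic multilinear monomial p*q, p in Y, q in Z *)
Definition pq_set (p q : {set 'I_m}) : {set 'I_n} :=
  [set lshift m i | i in p] :|: [set rshift m j | j in q].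

Definition pq_mon (p q : {set 'I_m}) : 'X_{1..n} :=
  [multinom ((i \in pq_set p q) : nat) | i < n].

(* M_g(p,q) = G, where g = pq G + Q, G only has variables of p,q and Q has
   no monomial divisible by pq containing only variables of p,q *)
Definition Mentry (g : {mpoly F[n]}) (p q : {set 'I_m}) : {mpoly F[n]} :=
  \sum_(mu <- msupp g | (pq_mon p q <= mu)%MM &&
                         [forall i, (mu i != 0%N) ==> (i \in pq_set p q)])
     (g@_mu *: 'X_[(mu - pq_mon p q)%MM])%R.

Local Notation N := #|{: {set 'I_m}}|.

Definition Mat_at (g : {mpoly F[n]}) (S : 'I_n -> F) : 'M[F]_(N, N) :=
  \matrix_(i < N, j < N) (Mentry g (enum_val i) (enum_val j)).@[S].

Definition decide (P : Prop) : bool :=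
  if excluded_middle_informative P then true else false.

(* maxrank(M_g) = max over S of rank(M_g|_S)  (every rank is <= N) *)
Definition maxrank (g : {mpoly F[n]}) : nat :=
  \max_(r < N.+1 | decide (exists S : 'I_n -> F, \rank (Mat_at g S) = r)) r.

End Formulas.

From Stdlib Require Import Reals Lra Lia ClassicalEpsilon.
From mathcomp Require Import all_boot all_algebra.
From mathcomp Require Import mpoly zify.

(* For a monomial x^nu, M_(x^nu g)|S = c * A * M_g|S * B, where A depends only
   on the Y-variables of nu and B only on its Z-variables.  Hence multiplying g
   by h raises the rank of M_g|S by a factor of at most |supp h|, and also of at
   most 2^min(|Y_h|, |Z_h|); with g = 1 this is the trivial bound
   rank M_v|S <= 2^a(v).

   An unbalanced node is
   covered by the trivial bound, as a(v) <= b(v) - k/2.  At a node v that is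
   not unbalanced, a child u with b(v) <= 2 b(u) is again weak, and a child with
   b(v) > 2 b(u) satisfies the trivial bound 2^a(u) <= 2^(b(v)/2), which is
   small enough because weakness forces k <= b(v).  Sums add ranks and sizes; an
   s-sparse product costs a factor 2^s, paid by the extra non-disjoint product
   gate in the depth; at a disjoint product b is additive, so the factor
   2^a(u) <= 2^b(u) contributed by the other factor u is absorbed by the growth
   of b. *)

Set Implicit Arguments.
Unset Strict Implicit.
Unset Printing Implicit Defensive.

Import GRing.Theory.

Section RankAlgebra.
Variable F : fieldType.
Local Open Scope ring_scope.

Lemma mxrank_sum_le (I : Type) (r : seq I) (P : pred I) p q (A : I -> 'M[F]_(p, q)) :
  (\rank (\sum_(i <- r | P i) A i)%R <= \sum_(i <- r | P i) \rank (A i))%N.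
Proof.
elim/big_ind2: _ => // [|B b C c leB leC]; first by rewrite mxrank0.
exact: leq_trans (mxrank_add B C) (leq_add leB leC).
Qed.

Lemma mxrank_mulmx_mid p1 p2 p3 p4 (A : 'M[F]_(p1, p2)) M (C : 'M_(p3, p4)) :
  (\rank (A *m M *m C) <= \rank M)%N.
Proof. exact: leq_trans (mxrankM_maxl _ _) (mxrankM_maxr _ _). Qed.

Lemma mulmx_delta_entry p q r t (A : 'M[F]_(p, r)) (B : 'M[F]_(t, q)) i0 j0 i j :
  (A *m delta_mx i0 j0 *m B) i j = A i i0 * B j0 j.
Proof.
have AdeltaE k : (A *m delta_mx i0 j0) i k = A i i0 * (k == j0)%:R.
  rewrite mxE (bigD1 i0) //= big1 ?addr0 => [|l /negbTE nli0]; first by rewrite mxE eqxx.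
  by rewrite mxE nli0 mulr0.
rewrite mxE (bigD1 j0) //= big1 ?addr0 => [|k /negbTE nkj0].
  by rewrite AdeltaE eqxx mulr1.
by rewrite AdeltaE nkj0 mulr0 mul0r.
Qed.

(* Terms sharing a key share their left factor, so each of the 2^|Y| key
   classes sums to a single matrix of the form A *m M *m C. *)
Lemma mxrank_sum_keyed_l (I : eqType) (T : finType) (r : seq I) (key : I -> {set T})
    (Y : {set T}) p1 p2 p3 p4 (A : {set T} -> 'M[F]_(p1, p2)) (M : 'M_(p2, p3))
    (C : I -> 'M_(p3, p4)) :
  {in r, forall i, key i \subset Y} ->
  (\rank (\sum_(i <- r) A (key i) *m M *m C i)%R <= 2 ^ #|Y| * \rank M)%N.
Proof.
move=> keyY; rewrite big_seq_cond (partition_big key (mem (powerset Y))) /=; last first.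
  by move=> i /andP[ri _]; rewrite powersetE keyY.
apply: leq_trans (mxrank_sum_le _ _ _) _.
rewrite -card_powerset -sum_nat_const; apply: leq_sum => P _.
rewrite (eq_bigr (fun i => A P *m M *m C i)) => [|i /andP[_ /eqP <-] //].
by rewrite -mulmx_sumr mxrank_mulmx_mid.
Qed.

Lemma mxrank_sum_keyed_r (I : eqType) (T : finType) (r : seq I) (key : I -> {set T})
    (Z : {set T}) p1 p2 p3 p4 (C : I -> 'M[F]_(p1, p2)) (M : 'M_(p2, p3))
    (B : {set T} -> 'M_(p3, p4)) :
  {in r, forall i, key i \subset Z} ->
  (\rank (\sum_(i <- r) C i *m M *m B (key i))%R <= 2 ^ #|Z| * \rank M)%N.
Proof.
move=> keyZ; rewrite -mxrank_tr -(mxrank_tr M) raddf_sum /=.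
rewrite (eq_bigr (fun i => (B (key i))^T *m M^T *m (C i)^T)) => [|i _].
  exact: (mxrank_sum_keyed_l (fun P => (B P)^T)).
by rewrite !trmx_mul mulmxA.
Qed.

End RankAlgebra.

Section PartialDerivativeMatrix.
Variables (F : fieldType) (m : nat).
Local Notation n := (m + m)%N.
Local Notation N := #|{: {set 'I_m}}|.
Local Notation poly := {mpoly F[n]}.
Local Open Scope ring_scope.

Lemma mem_pq_set_l (p q : {set 'I_m}) a : (lshift m a \in pq_set p q) = (a \in p).
Proof.
rewrite in_setU (mem_imset _ _ (@lshift_inj m m)); case: (a \in p) => //=.
by apply/imsetP => -[b _ /eqP]; rewrite eq_lrshift.
Qed.

Lemma mem_pq_set_r (p q : {set 'I_m}) b : (rshift m b \in pq_set p q) = (b \in q).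
Proof.
rewrite in_setU (mem_imset _ _ (@rshift_inj m m)) orbC; case: (b \in q) => //=.
by apply/imsetP => -[a _ /eqP]; rewrite eq_rlshift.
Qed.

Definition ysupp (l : 'X_{1..n}) : {set 'I_m} := [set a | l (lshift m a) != 0%N].
Definition zsupp (l : 'X_{1..n}) : {set 'I_m} := [set b | l (rshift m b) != 0%N].

Lemma mem_pq_set_supp (l : 'X_{1..n}) i :
  (i \in pq_set (ysupp l) (zsupp l)) = (l i != 0%N).
Proof.
by rewrite -(splitK i); case: (split i) => a; rewrite ?mem_pq_set_l ?mem_pq_set_r inE.
Qed.

Lemma pq_monE (p q : {set 'I_m}) i : pq_mon p q i = (i \in pq_set p q) :> nat.
Proof. by rewrite mnmE. Qed.

Lemma Mentry_condE (l : 'X_{1..n}) (p q : {set 'I_m}) :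
  ((pq_mon p q <= l)%MM && [forall i, (l i != 0%N) ==> (i \in pq_set p q)])
  = (p == ysupp l) && (q == zsupp l).
Proof.
apply/idP/idP => [/andP[/mnm_lepP le_pq /forallP supp_pq] | /andP[/eqP-> /eqP->]].
  have pqE i : (i \in pq_set p q) = (l i != 0%N).
    apply/idP/idP => [pq_i | /(implyP (supp_pq i)) //].
    by have := le_pq i; rewrite pq_monE pq_i; case: (l i).
  by apply/andP; split; apply/eqP/setP => a; rewrite inE -pqE ?mem_pq_set_l ?mem_pq_set_r.
apply/andP; split.
  by apply/mnm_lepP => i; rewrite pq_monE mem_pq_set_supp; case: (l i).
by apply/forallP => i; rewrite mem_pq_set_supp implybb.
Qed.

Lemma MentryX (l : 'X_{1..n}) (p q : {set 'I_m}) :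
  Mentry 'X_[l] p q = if (p == ysupp l) && (q == zsupp l)
                      then 'X_[l - pq_mon p q] else 0 :> poly.
Proof.
rewrite /Mentry msuppX big_cons big_nil Mentry_condE mcoeffX eqxx scale1r.
by case: ifP; rewrite ?addr0.
Qed.

Definition Xcofactor S (l : 'X_{1..n}) : F :=
  ('X_[l - pq_mon (ysupp l) (zsupp l)] : poly).@[S].

Lemma Mat_atX (l : 'X_{1..n}) S :
  Mat_at 'X_[l] S = Xcofactor S l *: delta_mx (enum_rank (ysupp l)) (enum_rank (zsupp l)).
Proof.
apply/matrixP => i j; rewrite !mxE MentryX !(can2_eq enum_valK enum_rankK).
by case: eqP => [->|_]; case: eqP => [->|_]; rewrite ?meval0 ?mulr0 ?mulr1 ?enum_rankK.
Qed.

Lemma Mat_atE (g : poly) S : Mat_at g S = \sum_(l <- msupp g) g@_l *: Mat_at 'X_[l] S.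
Proof.
apply/matrixP => i j; rewrite summxE !mxE /Mentry big_mkcond raddf_sum.
apply: eq_bigr => l _; rewrite !mxE MentryX Mentry_condE.
by case: ifP => _; rewrite ?raddf0 ?meval0 ?mulr0 //; apply: mevalZ.
Qed.

Lemma big_msupp_sub (V : lmodType F) (T : 'X_{1..n} -> V) (g : poly) r :
  uniq r -> {subset msupp g <= r} ->
  \sum_(l <- r) g@_l *: T l = \sum_(l <- msupp g) g@_l *: T l.
Proof.
move=> r_uniq supp_r; rewrite (bigID (mem (msupp g))) /= [X in _ + X]big1 ?addr0.
  rewrite -big_filter; apply/perm_big/uniq_perm; rewrite ?filter_uniq ?msupp_uniq //.
  by move=> l; rewrite mem_filter andb_idr //; apply: supp_r.
by move=> l /memN_msupp_eq0->; rewrite scale0r.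
Qed.

Lemma Mat_atD (g h : poly) S : Mat_at (g + h) S = Mat_at g S + Mat_at h S.
Proof.
have r_uniq := undup_uniq (msupp g ++ msupp h).
rewrite !Mat_atE -!(big_msupp_sub _ r_uniq) => [|l|l|l /msuppD_le].
- by rewrite -big_split; apply: eq_bigr => l _; rewrite mcoeffD scalerDl.
- by rewrite mem_undup mem_cat => ->; rewrite orbT.
- by rewrite mem_undup mem_cat => ->.
- by rewrite mem_undup.
Qed.

Lemma Mat_atZ c (g : poly) S : Mat_at (c *: g) S = c *: Mat_at g S.
Proof.
rewrite !Mat_atE -(big_msupp_sub _ (msupp_uniq g) (@msuppZ_le _ _ c g)).
by rewrite scaler_sumr; apply: eq_bigr => l _; rewrite mcoeffZ scalerA.
Qed.

Lemma Mat_at_sum (I : Type) (r : seq I) (G : I -> poly) S :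
  Mat_at (\sum_(i <- r) G i) S = \sum_(i <- r) Mat_at (G i) S.
Proof.
elim: r => [|i r IH]; last by rewrite !big_cons Mat_atD IH.
by rewrite !big_nil Mat_atE msupp0 big_nil.
Qed.

Lemma ysuppD (nu mu : 'X_{1..n}) : ysupp (nu + mu) = ysupp nu :|: ysupp mu.
Proof. by apply/setP => a; rewrite !inE mnmDE addn_eq0 negb_and. Qed.

Lemma zsuppD (nu mu : 'X_{1..n}) : zsupp (nu + mu) = zsupp nu :|: zsupp mu.
Proof. by apply/setP => a; rewrite !inE mnmDE addn_eq0 negb_and. Qed.

(* A variable occurring in both monomials is divided out only once. *)
Lemma pq_mon_subD (nu mu : 'X_{1..n}) :
  (nu + mu - pq_mon (ysupp (nu + mu)) (zsupp (nu + mu)))%MM =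
  ((nu - pq_mon (ysupp nu) (zsupp nu)) + (mu - pq_mon (ysupp mu) (zsupp mu)) +
   pq_mon (ysupp mu :&: ysupp nu) set0 + pq_mon set0 (zsupp mu :&: zsupp nu))%MM.
Proof.
apply/mnmP => i; rewrite ysuppD zsuppD !(mnmBE, mnmDE) !pq_monE.
rewrite -(splitK i); case: (split i) => a /=;
  rewrite ?mem_pq_set_l ?mem_pq_set_r !inE;
  by case: (nu _) => [|x]; case: (mu _) => [|y] /=; lia.
Qed.

(* Multiplying by a monomial with Y-variables P sends row p to row P :|: p,
   weighted by the variables of P :&: p that become squared (dually for
   columns). *)
Definition Ymul_mx S (P : {set 'I_m}) : 'M[F]_N :=
  \matrix_(i, i') ((enum_val i == P :|: enum_val i')%:R *
                   ('X_[pq_mon (enum_val i' :&: P) set0] : poly).@[S]).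

Definition Zmul_mx S (Q : {set 'I_m}) : 'M[F]_N :=
  \matrix_(j', j) ((enum_val j == Q :|: enum_val j')%:R *
                   ('X_[pq_mon set0 (enum_val j' :&: Q)] : poly).@[S]).

Lemma Mat_atXD (nu mu : 'X_{1..n}) S :
  Mat_at 'X_[nu + mu] S =
  Xcofactor S nu *: (Ymul_mx S (ysupp nu) *m Mat_at 'X_[mu] S *m Zmul_mx S (zsupp nu)).
Proof.
rewrite !Mat_atX -scalemxAr -scalemxAl; apply/matrixP => i j.
rewrite [RHS]mxE [X in _ * X]mxE mulmx_delta_entry !mxE !enum_rankK ysuppD zsuppD.
rewrite -!(can2_eq enum_valK enum_rankK).
case: eqP => _; case: eqP => _ /=; rewrite ?(mulr0n, mulr1n, mulr0, mul0r, mulr1, mul1r) //.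
by rewrite /Xcofactor pq_mon_subD !mpolyXD !mevalM !mulrA.
Qed.

Lemma Mat_atXM (nu : 'X_{1..n}) (g : poly) S :
  Mat_at ('X_[nu] * g) S =
  Xcofactor S nu *: (Ymul_mx S (ysupp nu) *m Mat_at g S *m Zmul_mx S (zsupp nu)).
Proof.
rewrite {1}(mpolyE g) mulr_sumr Mat_at_sum [in RHS]Mat_atE.
rewrite mulmx_sumr mulmx_suml scaler_sumr; apply: eq_bigr => l _.
by rewrite -scalerAr -mpolyXD Mat_atZ Mat_atXD -scalemxAr -scalemxAl !scalerA mulrC.
Qed.

Lemma Mat_atM (h g : poly) S :
  Mat_at (h * g) S = \sum_(nu <- msupp h) h@_nu *: Mat_at ('X_[nu] * g) S.
Proof.
rewrite {1}(mpolyE h) mulr_suml Mat_at_sum; apply: eq_bigr => nu _.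
by rewrite -scalerAl Mat_atZ.
Qed.

Lemma rank_Mat_atM_msupp (h g : poly) S :
  (\rank (Mat_at (h * g) S) <= size (msupp h) * \rank (Mat_at g S))%N.
Proof.
rewrite Mat_atM; apply: leq_trans (mxrank_sum_le _ _ _) _.
rewrite -[size _]count_predT -sum1_count big_distrl /= leq_sum // => nu _.
rewrite mul1n Mat_atXM; apply: leq_trans (mxrank_scale _ _) _.
by apply: leq_trans (mxrank_scale _ _) (mxrank_mulmx_mid _ _ _).
Qed.

Lemma rank_Mat_atM_ysupp (h g : poly) S (Y : {set 'I_m}) :
  {in msupp h, forall nu, ysupp nu \subset Y} ->
  (\rank (Mat_at (h * g) S) <= 2 ^ #|Y| * \rank (Mat_at g S))%N.
Proof.
move=> hY; rewrite Mat_atM (eq_bigr (fun nu => Ymul_mx S (ysupp nu) *m Mat_at g S *m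
  ((h@_nu * Xcofactor S nu) *: Zmul_mx S (zsupp nu)))) => [|nu _].
  exact: mxrank_sum_keyed_l.
by rewrite Mat_atXM scalerA scalemxAr.
Qed.

Lemma rank_Mat_atM_zsupp (h g : poly) S (Z : {set 'I_m}) :
  {in msupp h, forall nu, zsupp nu \subset Z} ->
  (\rank (Mat_at (h * g) S) <= 2 ^ #|Z| * \rank (Mat_at g S))%N.
Proof.
move=> hZ; rewrite Mat_atM (eq_bigr (fun nu => ((h@_nu * Xcofactor S nu) *:
  Ymul_mx S (ysupp nu)) *m Mat_at g S *m Zmul_mx S (zsupp nu))) => [|nu _].
  exact: mxrank_sum_keyed_r.
by rewrite Mat_atXM scalerA !scalemxAl.
Qed.

Lemma rank_Mat_at1 S : (\rank (Mat_at (1 : poly) S) <= 1)%N.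
Proof.
by rewrite -mpolyX0 Mat_atX; apply: leq_trans (mxrank_scale _ _) _; rewrite mxrank_delta.
Qed.

End PartialDerivativeMatrix.

Lemma decideP (P : Prop) : reflect P (decide P).
Proof. by rewrite /decide; case: excluded_middle_informative => ?; constructor. Qed.

Lemma maxrank_attained (F : fieldType) (m : nat) (g : {mpoly F[m + m]}) :
  exists S, maxrank g = \rank (Mat_at g S).
Proof.
pose P (r : 'I_#|{: {set 'I_m}}|.+1) := decide (exists S, \rank (Mat_at g S) = r).
have [r /decideP [S <-] max_r] : {r | P r & \max_(i in P) i = r}.
  apply: eq_bigmax_cond; pose S0 : 'I_(m + m) -> F := fun=> 0%R.
  apply/card_gt0P; exists (inord (\rank (Mat_at g S0))).
  by apply/decideP; exists S0; rewrite inordK // ltnS rank_leq_row.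
by exists S; exact: max_r.
Qed.

Lemma bigmax_addl (T : Type) (r : seq T) c (G : T -> nat) : r <> [::] ->
  (\max_(x <- r) (c + G x) = c + \max_(x <- r) G x)%N.
Proof.
elim: r => [//|x [|y r] IH] _; first by rewrite !big_seq1.
by rewrite big_cons IH // [in RHS]big_cons addn_maxr.
Qed.

Section FormulaStructure.
Variables (F : fieldType) (m : nat).
Local Notation n := (m + m)%N.
Local Notation form := (formula F n).

Lemma msupp_fpoly_vars (f : form) nu i :
  nu \in msupp (fpoly f) -> nu i != 0%N -> i \in fvars f.
Proof.
elim: f nu => [j|c|f1 IH1 f2 IH2|f1 IH1 f2 IH2] nu /=.
- by rewrite msuppX inE => /eqP->; rewrite mnm1E inE; case: (j =P i) => [->|].
- by rewrite msuppC; case: (c == 0)%R => //; rewrite inE => /eqP->; rewrite mnm0E.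
- move=> /msuppD_le; rewrite mem_cat inE => /orP[supp1 | supp2] nu_i.
  + by rewrite (IH1 _ supp1 nu_i).
  + by rewrite (IH2 _ supp2 nu_i) orbT.
- move=> /msuppM_le /allpairsP[[nu1 nu2] /= [supp1 supp2 ->]].
  rewrite mnmDE addn_eq0 negb_and inE => /orP[nu_i | nu_i].
  + by rewrite (IH1 _ supp1 nu_i).
  + by rewrite (IH2 _ supp2 nu_i) orbT.
Qed.

Lemma ysupp_fpoly (f : form) : {in msupp (fpoly f), forall nu, ysupp nu \subset Yvars f}.
Proof. by move=> nu supp_nu; apply/subsetP => a; rewrite !inE; apply: msupp_fpoly_vars. Qed.

Lemma zsupp_fpoly (f : form) : {in msupp (fpoly f), forall nu, zsupp nu \subset Zvars f}.
Proof. by move=> nu supp_nu; apply/subsetP => b; rewrite !inE; apply: msupp_fpoly_vars. Qed.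

Lemma rank_Mat_at_fpolyM (f : form) (g : {mpoly F[n]}) S :
  (\rank (Mat_at (fpoly f * g)%R S) <=
     2 ^ minn #|Yvars f| #|Zvars f| * \rank (Mat_at g S))%N.
Proof.
case: (leqP #|Yvars f| #|Zvars f|) => _.
- exact: rank_Mat_atM_ysupp (@ysupp_fpoly f).
- exact: rank_Mat_atM_zsupp (@zsupp_fpoly f).
Qed.

Lemma rank_Mat_at_fpoly (f : form) S :
  (\rank (Mat_at (fpoly f) S) <= 2 ^ minn #|Yvars f| #|Zvars f|)%N.
Proof.
rewrite -[fpoly f]GRing.mulr1; apply: leq_trans (rank_Mat_at_fpolyM _ _ _) _.
by rewrite -[leqRHS]muln1 leq_mul2l rank_Mat_at1 orbT.
Qed.

Definition child (c f : form) : Prop :=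
  match f with
  | FAdd f1 f2 | FMul f1 f2 => c = f1 \/ c = f2
  | _ => False
  end.

Lemma leaf_pathsP (f : form) p : List.In p (leaf_paths f) ->
  p = [:: f] \/ exists c q, [/\ child c f, p = f :: q & List.In q (leaf_paths c)].
Proof.
case: f => [i|c|f1 f2|f1 f2] /=; try by case=> // <-; left.
all: move/List.in_map_iff => [q [<- /List.in_app_iff pq]]; right.
all: by case: pq => ?; [exists f1 | exists f2]; exists q; split=> //; [left | right].
Qed.

Lemma child_leaf_paths (c f : form) p :
  child c f -> List.In p (leaf_paths c) -> List.In (f :: p) (leaf_paths f).
Proof.
case: f => [i []|c' []|f1 f2|f1 f2] cf pc; apply/List.in_map_iff; exists p.
all: by split=> //; apply/List.in_app_iff; case: cf => <-; [left | right].
Qed.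

Lemma child_fvars (c f : form) : child c f -> fvars c \subset fvars f.
Proof. by case: f => [i []|c' []|f1 f2|f1 f2] [->|->]; rewrite ?subsetUl ?subsetUr. Qed.

Lemma leaf_paths_fvars (f : form) p u :
  List.In p (leaf_paths f) -> List.In u p -> fvars u \subset fvars f.
Proof.
elim: f p => [i|c|f1 IH1 f2 IH2|f1 IH1 f2 IH2] p /leaf_pathsP[->|[c' [q [cf -> qc]]]].
all: try by [case=> // <- | case: cf].
all: case=> [<- //|uq]; apply: subset_trans (child_fvars cf).
all: by case: cf qc => -> qc; [apply: IH1 qc uq | apply: IH2 qc uq].
Qed.

Lemma prod_gates_ok_subformula s (Phi v : form) :
  prod_gates_ok s Phi -> List.In v (subformulas Phi) -> prod_gates_ok s v.
Proof.
elim: Phi => [i|c|f1 IH1 f2 IH2|f1 IH1 f2 IH2] /= ok; try by case=> // <-.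
- by case: ok => ok1 ok2 [<- //|/List.in_app_iff[]]; [apply: IH1 | apply: IH2].
- by case: ok => _ [ok1 ok2] [<- //|/List.in_app_iff[]]; [apply: IH1 | apply: IH2].
Qed.

Lemma leaf_paths_neq_nil (f : form) : leaf_paths f <> [::].
Proof. by elim: f => //= f1 + f2 _; case: (leaf_paths f1). Qed.

Lemma psdepth_child (c f : form) : child c f ->
  (nondisj_prod f + psdepth c <= psdepth f)%N.
Proof.
case: f => [i []|c' []|f1 f2|f1 f2] /= cf.
all: rewrite /psdepth /= big_map big_cat /= ?bigmax_addl ?addn_maxr;
  try exact: leaf_paths_neq_nil.
all: by case: cf => ->; rewrite ?add0n ?leq_add2l ?leq_maxl ?leq_maxr.
Qed.

Lemma fsize_child (c f : form) : child c f -> (fsize c < fsize f)%N.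
Proof.
by case: f => [i []|c' []|f1 f2|f1 f2] [->|->] /=; rewrite ltnS ?leq_addr ?leq_addl.
Qed.

Definition weight s (f : form) : nat := 2 ^ (s * psdepth f) * fsize f.

Lemma weight_gt0 s (f : form) : (0 < weight s f)%N.
Proof. by rewrite muln_gt0 expn_gt0; case: f. Qed.

Lemma weight_child s (c f : form) : child c f ->
  (2 ^ (s * nondisj_prod f) * weight s c <= weight s f)%N.
Proof.
move=> cf; rewrite /weight mulnA -expnD -mulnDr leq_mul //.
  by rewrite leq_pexp2l // leq_mul2l psdepth_child ?orbT.
exact: ltnW (fsize_child cf).
Qed.

Lemma weight_child_le s (c f : form) : child c f -> (weight s c <= weight s f)%N.
Proof. by move=> cf; apply: leq_trans (weight_child s cf); rewrite leq_pmull ?expn_gt0. Qed.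

Lemma weight_add s (f1 f2 : form) :
  (weight s f1 + weight s f2 <= weight s (FAdd f1 f2))%N.
Proof.
have le_pow c : child c (FAdd f1 f2) ->
    (2 ^ (s * psdepth c) <= 2 ^ (s * psdepth (FAdd f1 f2)))%N.
  move=> /psdepth_child psd_c; rewrite leq_pexp2l // leq_mul2l.
  by rewrite (psd_c : (psdepth c <= _)%N) orbT.
rewrite /weight /= mulnSr mulnDr (leq_trans _ (leq_addr _ _)) // leq_add //.
  by rewrite leq_mul // le_pow //; left.
by rewrite leq_mul // le_pow //; right.
Qed.

End FormulaStructure.

Section RealFacts.
Local Open Scope R_scope.

Lemma INR_leq (a b : nat) : (a <= b)%N -> INR a <= INR b.
Proof. by move/leP; apply: le_INR. Qed.

Lemma INR_expn2 (x : nat) : INR (2 ^ x) = Rpower 2 (INR x).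
Proof.
rewrite Rpower_pow; last lra.
by elim: x => [//|x IH]; rewrite expnS mulnE mult_INR IH /= Rmult_comm.
Qed.

Lemma Rpower2_gt0 (x : R) : 0 < Rpower 2 x.
Proof. exact: exp_pos. Qed.

Lemma Rpower2_le (x y : R) : x <= y -> Rpower 2 x <= Rpower 2 y.
Proof. by move=> le_xy; apply: Rle_Rpower => //; lra. Qed.

End RealFacts.

Section WeakNodes.
Variables (F : fieldType) (m : nat).
Local Notation n := (m + m)%N.
Local Notation form := (formula F n).
Local Open Scope R_scope.

Lemma anode_le_bnode (f : form) : anode f <= bnode f.
Proof.
rewrite /anode /bnode.
have := INR_leq (geq_minl #|Yvars f| #|Zvars f|).
have := INR_leq (geq_minr #|Yvars f| #|Zvars f|).
lra.
Qed.

Lemma bnode_le (u f : form) : fvars u \subset fvars f -> bnode u <= bnode f.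
Proof.
move=> /subsetP uf; rewrite /bnode.
have YS : Yvars u \subset Yvars f by apply/subsetP => a; rewrite !inE => /uf.
have ZS : Zvars u \subset Zvars f by apply/subsetP => b; rewrite !inE => /uf.
have := INR_leq (subset_leq_card YS); have := INR_leq (subset_leq_card ZS).
lra.
Qed.

Section Gate.
Variables (f f1 f2 : form).
Hypothesis fvarsU : fvars f = fvars f1 :|: fvars f2.

Lemma Yvars_setU : Yvars f = Yvars f1 :|: Yvars f2.
Proof. by apply/setP => a; rewrite !inE fvarsU inE. Qed.

Lemma Zvars_setU : Zvars f = Zvars f1 :|: Zvars f2.
Proof. by apply/setP => b; rewrite !inE fvarsU inE. Qed.

Lemma bnode_setU_le : bnode f <= bnode f1 + bnode f2.
Proof.
rewrite /bnode Yvars_setU Zvars_setU.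
have := INR_leq (leq_card_setU (Yvars f1) (Yvars f2)).1.
have := INR_leq (leq_card_setU (Zvars f1) (Zvars f2)).1.
rewrite !plus_INR; lra.
Qed.

Lemma bnode_setU_disjoint : [disjoint fvars f1 & fvars f2] ->
  bnode f = bnode f1 + bnode f2.
Proof.
move=> dis12.
have disY : [disjoint Yvars f1 & Yvars f2].
  rewrite -setI_eq0; apply/eqP/setP => a; rewrite !inE.
  by case f1a: (_ \in fvars f1) => //=; rewrite (disjointFr dis12 f1a).
have disZ : [disjoint Zvars f1 & Zvars f2].
  rewrite -setI_eq0; apply/eqP/setP => b; rewrite !inE.
  by case f1b: (_ \in fvars f1) => //=; rewrite (disjointFr dis12 f1b).
move: (leq_card_setU (Yvars f1) (Yvars f2)).2 (leq_card_setU (Zvars f1) (Zvars f2)).2.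
rewrite disY disZ /bnode Yvars_setU Zvars_setU => /eqP-> /eqP->.
rewrite !plus_INR; lra.
Qed.

End Gate.

Lemma leaf_paths_head (f : form) p : List.In p (leaf_paths f) -> exists q, p = f :: q.
Proof. by case/leaf_pathsP => [->|[c [q [_ -> _]]]]; [exists [::] | exists q]. Qed.

Lemma central_cons (f c : form) p :
  List.In p (leaf_paths c) -> central p -> bnode f <= 2 * bnode c -> central (f :: p).
Proof. by case/leaf_paths_head=> q ->. Qed.

(* Since b(f) <= b(f1) + b(f2), some child u satisfies b(f) <= 2 b(u). *)
Lemma central_path_gate (f f1 f2 : form) :
  child f1 f -> child f2 f -> fvars f = fvars f1 :|: fvars f2 ->
  (exists2 p, List.In p (leaf_paths f1) & central p) ->
  (exists2 p, List.In p (leaf_paths f2) & central p) ->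
  exists2 p, List.In p (leaf_paths f) & central p.
Proof.
move=> ch1 ch2 /bnode_setU_le le_b [p1 lp1 cp1] [p2 lp2 cp2].
case: (Rle_dec (bnode f) (2 * bnode f1)) => b1.
  by exists (f :: p1); [apply: child_leaf_paths ch1 lp1 | apply: central_cons lp1 cp1 b1].
exists (f :: p2); first exact: child_leaf_paths ch2 lp2.
by apply: central_cons lp2 cp2 _; lra.
Qed.

Lemma central_path_exists (f : form) :
  exists2 p, List.In p (leaf_paths f) & central p.
Proof.
elim: f => [i|c|f1 IH1 f2 IH2|f1 IH1 f2 IH2].
- by exists [:: FVar i]; first left.
- by exists [:: FConst c]; first left.
- by apply: central_path_gate IH1 IH2; [left | right | ].
- by apply: central_path_gate IH1 IH2; [left | right | ].
Qed.

Lemma weak_bnode_ge k (f : form) : weak k f -> k <= bnode f.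
Proof.
case: (central_path_exists f) => p lp cp /(_ p lp cp) /List.Exists_exists[u [up]].
have := bnode_le (leaf_paths_fvars lp up); have := pos_INR (minn #|Yvars u| #|Zvars u|).
rewrite /unbalanced /anode; lra.
Qed.

Lemma weak_child k (c f : form) : weak k f -> ~ unbalanced k f -> child c f ->
  bnode f <= 2 * bnode c -> weak k c.
Proof.
move=> weak_f bal_f cf le_b p lp cp.
by case/List.Exists_cons: (weak_f _ (child_leaf_paths cf lp) (central_cons lp cp le_b)).
Qed.

Lemma weak_leaf k (f : form) : leaf_paths f = [:: [:: f]] -> weak k f -> unbalanced k f.
Proof.
move=> lpE /(_ [:: f]); rewrite lpE => /(_ (or_introl erefl) I).
by case/List.Exists_cons => // /List.Exists_nil.
Qed.

End WeakNodes.

Section RankBound.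
Variables (F : fieldType) (m s : nat) (k : R).
Local Notation n := (m + m)%N.
Local Notation form := (formula F n).
Local Open Scope R_scope.

Definition rank_at (f : form) S : R := INR (\rank (Mat_at (fpoly f) S)).

Definition rank_bound (f : form) : R := INR (weight s f) * Rpower 2 (bnode f - k / 2).

Lemma unbalanced_dec (f : form) : {unbalanced k f} + {~ unbalanced k f}.
Proof. exact: Rge_dec. Qed.

Lemma rank_at_anode (f : form) S : rank_at f S <= Rpower 2 (anode f).
Proof. by rewrite /rank_at /anode -INR_expn2; apply/INR_leq/rank_Mat_at_fpoly. Qed.

Lemma rank_at_fpolyM (o : form) g S :
  INR (\rank (Mat_at (fpoly o * g)%R S)) <= Rpower 2 (anode o) * INR (\rank (Mat_at g S)).
Proof. by rewrite /anode -INR_expn2 -mult_INR; apply/INR_leq/rank_Mat_at_fpolyM. Qed.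

Lemma rank_bound_weight_le (f : form) (w : nat) x :
  x <= INR w * Rpower 2 (bnode f - k / 2) -> (w <= weight s f)%N -> x <= rank_bound f.
Proof.
move=> le_x /INR_leq le_w; apply: Rle_trans le_x _.
by apply: Rmult_le_compat_r le_w; apply/Rlt_le/Rpower2_gt0.
Qed.

(* a <= b and a <= b - k, hence a is at most their average b - k/2. *)
Lemma rank_at_unbalanced (f : form) S : unbalanced k f -> rank_at f S <= rank_bound f.
Proof.
move=> unbal; apply: (@rank_bound_weight_le f 1) (weight_gt0 s f).
rewrite /= Rmult_1_l; apply: Rle_trans (rank_at_anode f S) (Rpower2_le _).
by have := anode_le_bnode f; rewrite /unbalanced in unbal; lra.
Qed.

Lemma rank_at_child (c f : form) S :
  (weak k c -> rank_at c S <= rank_bound c) -> weak k f -> ~ unbalanced k f -> child c f ->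
  rank_at c S <= INR (weight s c) * Rpower 2 (bnode f - k / 2).
Proof.
move=> IH weak_f bal_f cf.
case: (Rle_dec (bnode f) (2 * bnode c)) => le_b.
  apply: Rle_trans (IH (weak_child weak_f bal_f cf le_b)) _.
  apply: Rmult_le_compat_l; first exact: pos_INR.
  by apply: Rpower2_le; have := bnode_le (child_fvars cf); lra.
(* Otherwise the trivial bound suffices: a(c) <= b(c) < b(f)/2 <= b(f) - k/2. *)
have le_a : anode c <= bnode f - k / 2.
  by have := anode_le_bnode c; have := weak_bnode_ge weak_f; lra.
have w_ge1 : 1 <= INR (weight s c) by exact: (INR_leq (weight_gt0 s c)).
have := rank_at_anode c S; have := Rpower2_le le_a; have := Rpower2_gt0 (bnode f - k / 2).
nra.
Qed.

Lemma rank_at_add (f1 f2 : form) S :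
  rank_at (FAdd f1 f2) S <= rank_at f1 S + rank_at f2 S.
Proof. by rewrite /rank_at -plus_INR /= Mat_atD; apply/INR_leq/mxrank_add. Qed.

Lemma rank_at_disjoint_product (o c f : form) S :
  fpoly f = (fpoly o * fpoly c)%R -> bnode f = bnode o + bnode c ->
  (weight s c <= weight s f)%N -> rank_at c S <= rank_bound c -> rank_at f S <= rank_bound f.
Proof.
move=> fE bE le_w rank_c; apply: rank_bound_weight_le le_w.
apply: Rle_trans (_ : _ <= Rpower 2 (anode o) * rank_at c S) _.
  by rewrite /rank_at fE; apply: rank_at_fpolyM.
apply: Rle_trans (Rmult_le_compat_l _ _ _ (Rlt_le _ _ (Rpower2_gt0 _)) rank_c) _.
rewrite /rank_bound Rmult_comm Rmult_assoc -Rpower_plus.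
apply: Rmult_le_compat_l; first exact: pos_INR.
by apply: Rpower2_le; have := anode_le_bnode o; lra.
Qed.

Lemma rank_at_sparse_product (o c f : form) S :
  fpoly f = (fpoly o * fpoly c)%R -> (size (msupp (fpoly o)) <= 2 ^ s)%N ->
  (2 ^ s * weight s c <= weight s f)%N ->
  rank_at c S <= INR (weight s c) * Rpower 2 (bnode f - k / 2) -> rank_at f S <= rank_bound f.
Proof.
move=> fE sparse_o le_w rank_c; apply: (rank_bound_weight_le _ le_w).
rewrite mult_INR Rmult_assoc.
apply: Rle_trans (_ : _ <= INR (2 ^ s) * rank_at c S) _.
  rewrite /rank_at fE -mult_INR; apply/INR_leq.
  by apply: leq_trans (rank_Mat_atM_msupp _ _ _) _; rewrite leq_mul2r sparse_o orbT.
by apply: Rmult_le_compat_l rank_c; exact: pos_INR.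
Qed.

Section Gates.
Variables (f1 f2 : form) (S : 'I_n -> F).
Hypotheses (IH1 : weak k f1 -> rank_at f1 S <= rank_bound f1)
           (IH2 : weak k f2 -> rank_at f2 S <= rank_bound f2).

Lemma rank_at_add_bound :
  weak k (FAdd f1 f2) -> rank_at (FAdd f1 f2) S <= rank_bound (FAdd f1 f2).
Proof.
move=> weak_f; have [unbal|bal] := unbalanced_dec (FAdd f1 f2).
  exact: rank_at_unbalanced.
have rank1 := rank_at_child IH1 weak_f bal (or_introl erefl).
have rank2 := rank_at_child IH2 weak_f bal (or_intror erefl).
have rank_sum := rank_at_add f1 f2 S.
by apply: (rank_bound_weight_le _ (weight_add s f1 f2)); rewrite plus_INR; lra.
Qed.

Lemma rank_at_mul_bound : disjoint_prod f1 f2 || sparse_prod s f1 f2 ->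
  weak k (FMul f1 f2) -> rank_at (FMul f1 f2) S <= rank_bound (FMul f1 f2).
Proof.
move=> gate_ok weak_f; have [unbal|bal] := unbalanced_dec (FMul f1 f2).
  exact: rank_at_unbalanced.
have ch1 : child f1 (FMul f1 f2) by left.
have ch2 : child f2 (FMul f1 f2) by right.
case D: (disjoint_prod f1 f2) gate_ok => /= gate_ok.
  have bE : bnode (FMul f1 f2) = bnode f1 + bnode f2.
    by apply: bnode_setU_disjoint; rewrite // -setI_eq0.
  case: (Rle_dec (bnode (FMul f1 f2)) (2 * bnode f1)) => le_b1.
    apply: (@rank_at_disjoint_product f2 f1) (weight_child_le s ch1)
      (IH1 (weak_child weak_f bal ch1 le_b1)); first by rewrite /= mulrC.
    by rewrite bE Rplus_comm.
  have le_b2 : bnode (FMul f1 f2) <= 2 * bnode f2 by lra.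
  exact: (@rank_at_disjoint_product f1 f2) (weight_child_le s ch2)
    (IH2 (weak_child weak_f bal ch2 le_b2)).
have le_w c : child c (FMul f1 f2) -> (2 ^ s * weight s c <= weight s (FMul f1 f2))%N.
  by move/(weight_child s); rewrite /= D muln1.
case/orP: gate_ok => sparse.
  exact: rank_at_sparse_product sparse (le_w _ ch2) (rank_at_child IH2 weak_f bal ch2).
apply: (@rank_at_sparse_product f2 f1) sparse (le_w _ ch1) (rank_at_child IH1 weak_f bal ch1).
by rewrite /= mulrC.
Qed.

End Gates.

Lemma rank_at_le_bound (f : form) S :
  prod_gates_ok s f -> weak k f -> rank_at f S <= rank_bound f.
Proof.
elim: f => [i|c|f1 IH1 f2 IH2|f1 IH1 f2 IH2] /=.
- by move=> _ /(weak_leaf (f := FVar i) erefl); apply: rank_at_unbalanced.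
- by move=> _ /(weak_leaf (f := FConst c) erefl); apply: rank_at_unbalanced.
- by case=> ok1 ok2; apply: rank_at_add_bound; [apply: IH1 | apply: IH2].
- by case=> gate_ok [ok1 ok2]; apply: rank_at_mul_bound gate_ok; [apply: IH1 | apply: IH2].
Qed.

End RankBound.

Theorem lemma8 (F : fieldType) (m s d : nat) (k : R)
    (Phi v : formula F (m + m)) :
  product_sparse s d Phi ->
  List.In v (subformulas Phi) ->
  weak k v ->
  Rle (INR (maxrank (fpoly v)))
      (Rmult (Rmult (INR (expn 2 (s * psdepth v))) (INR (fsize v)))
             (Rpower 2 (Rminus (bnode v) (Rdiv k 2)))).
Proof.
move=> [ok_Phi _] v_in weak_v; have [S ->] := maxrank_attained (fpoly v).
rewrite -mult_INR.
exact: rank_at_le_bound (prod_gates_ok_subformula ok_Phi v_in) weak_v.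
Qed.
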